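(* If $W$ is a sunword, then $W$ is jump-free.
   Context: Multisuns: a multisun is a graph with no induced $K_4$ minus an edge, of odd order, whose maximal cliques of size $2$ form a Hamiltonian cycle $C$ (the rim); the other maximal cliques consist of pairwise nonconsecutive vertices of $C$ (inscribed cliques). A sub-multisun deletes the edge sets of some, but not all, inscribed cliques. An $AB$-path (inscribed cliques $A,B$, possibly equal) is a subpath of $C$ with one end in $A$, the other in $B$, internal vertices in no inscribed clique; $A$-path $=AA$-path; for $v\in B$ an $Av$-path is an $AB$-path ending at $v$ in $B$. N-conditions: (N1) every $A$-path has an even number $\ge4$ of vertices; (N2) inscribed cliques have odd size; (N3) all inscribed cliques share a vertex $\xi\in V(C)$ and are otherwise disjoint; (N4) every $A\xi$-path has an even number of vertices; (N5) for $A\ne B$ every $AB$-path has an odd number of vertices. A sunoid is a multisun such that it and all its sub-multisuns satisfy the N-conditions. Words: alphabet $\Sigma$ with distinguished letter $\epsilon$; $x^k$ is $k$ copies of $x$. The pattern $\pi(w)$ is obtained by repeatedly deleting $\epsilon\epsilon$. $v\sim w$ if related by cyclic shift and/or reversal; $u\approx v$ iff $\pi(u)\sim\pi(v)$; $[w]$ is the class (cyclic word). For a multisun satisfying the N-conditions, label rim vertices by $\sigma$ (in $\ge2$ inscribed cliques), by a letter specific to $X$ (only in inscribed clique $X$), or $\epsilon$ (in none); reading around the rim gives $w_G$ and $[w_G]$ is its s-word. An s-word is either (i) $[a^\lambda]$ ($\Sigma=\{\epsilon,a\}$, $\lambda$ odd) or (ii) $[\sigma x_{i_1}^{\lambda_1}\epsilon\cdots\epsilon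 x_{i_s}^{\lambda_s}]$ with positive $\lambda_j$, proper letters $x_{i_j}\in\Sigma\setminus\{\epsilon,\sigma\}$, $x_{i_h}\ne x_{i_{h+1}}$, each proper letter's exponents summing to an even number. A sunword is the s-word of a sunoid. Induced order (type (ii)): take a representative $\sigma u$ equal to its own pattern, replace each interval $xx$ of $u$ ($x$ proper) by $x\epsilon\epsilon x$ to get $z$, let $v=\sigma\epsilon\epsilon z\epsilon\epsilon=v_1\cdots v_N$ arranged cyclically; $\sigma$ is least and for proper $x\ne y$, $x\prec y$ iff the least cyclic distance from position $1$ to a position labeled $x$ is smaller than for $y$. Jumps (type (ii)): write $W=[x_{i_0}x_{i_1}^{\lambda_1}\epsilon\cdots\epsilon x_{i_s}^{\lambda_s}]$ with $x_{i_0}=\sigma$. Letters $x\preceq y$ of $\Sigma\setminus\{\epsilon\}$ form a cover pair if no $z\in\Sigma\setminus\{\epsilon\}$, $z\ne x,y$, has $x\prec z\prec y$. A jump is a pair of cyclically consecutive letters $x_{i_h},x_{i_{h+1}}$ ($h=0,\dots,s$, indices mod $s+1$) not forming a cover pair; $W$ is jump-free if it has no jump. An s-word of type (i) has no jumps. *)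

From mathcomp Require Import all_boot.
Set Implicit Arguments.
Unset Strict Implicit.
Unset Printing Implicit Defensive.

Section Words.
Variables (A : eqType) (eps sig : A).

(* pattern: repeatedly delete "eps eps" (computes the unique normal form) *)
Definition pattern (s : seq A) : seq A :=
  foldr (fun x acc => if acc is y :: t then
                        if (x == eps) && (y == eps) then t else x :: acc
                      else [:: x]) [::] s.

Definition cyc_equiv (v w : seq A) : Prop :=
  exists k, v = rot k w \/ v = rot k (rev w).

Definition proper (x : A) : bool := (x != eps) && (x != sig).

Fixpoint expand (s : seq A) : seq A :=
  match s with
  | x :: ((y :: _) as t) =>
      if (x == y) && proper x then x :: eps :: eps :: expand t
      else x :: expand t
  | _ => s
  end.

Fixpoint collapse (s : seq A) : seq A :=
  match s with
  | x :: ((y :: _) as t) => if x == y then collapse t else x :: collapse t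
  | _ => s
  end.

(* for a representative  sig u  equal to its own pattern:
   v = sig eps eps z eps eps *)
Definition vword (u : seq A) : seq A :=
  sig :: eps :: eps :: expand u ++ [:: eps; eps].

(* least cyclic distance from position 1 (index 0) to a position labelled x *)
Definition mindist (v : seq A) (x : A) : nat :=
  let N := size v in
  foldr minn N [seq minn j (N - j) | j <- iota 0 N & nth eps v j == x].

Definition prec (v : seq A) (x y : A) : Prop :=
  [/\ x != eps, y != eps, x \in v, y \in v &
    ((x = sig /\ y <> sig) \/
     [/\ x <> sig, y <> sig, x <> y & mindist v x < mindist v y])].

Definition cover (v : seq A) (x y : A) : Prop :=
  (x = y \/ prec v x y) /\
  ~ (exists z, [/\ z != eps, z <> x, z <> y, prec v x z & prec v z y]).

Definition cover_pair (v : seq A) (a b : A) : Prop := cover v a b \/ cover v b a.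

Definition letters (u : seq A) : seq A :=
  sig :: collapse (filter (predC1 eps) u).

Definition jump_free_rep (u : seq A) : Prop :=
  let v := vword u in
  let L := letters u in
  forall i, i < size L ->
    cover_pair v (nth sig L i) (nth sig L (i.+1 %% size L)).

(* jump-freeness of the cyclic word [w]: every representative starting
   with sig, reduced to its pattern, has no jump.  Words without sig
   (type (i)) have no jumps. *)
Definition jump_free (w : seq A) : Prop :=
  forall r t, cyc_equiv r w -> r = sig :: t -> jump_free_rep (pattern t).

End Words.

Section Graphs.
Variables (V : finType).

Definition clique (adj : rel V) (Q : {set V}) : bool :=
  [forall x in Q, [forall y in Q, (x != y) ==> adj x y]].

Definition maxclique (adj : rel V) (Q : {set V}) : bool :=
  clique adj Q && [forall Q' : {set V}, (Q \proper Q') ==> ~~ clique adj Q'].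

Definition inscribed (adj : rel V) (Q : {set V}) : bool :=
  maxclique adj Q && (#|Q| != 2).

Definition consec (c : seq V) (x y : V) : bool :=
  (y == next c x) || (x == next c y).

Definition no_induced_diamond (adj : rel V) : Prop :=
  forall a b x y : V, uniq [:: a; b; x; y] ->
    ~ [/\ adj a b, adj a x, adj a y, adj b x & adj b y /\ ~~ adj x y].

(* G = (V, adj) is a multisun with rim (Hamiltonian cycle) c *)
Definition multisun (adj : rel V) (c : seq V) : Prop :=
  [/\ [/\ symmetric adj, irreflexive adj, no_induced_diamond adj & odd #|V|],
      [/\ uniq c, (forall v, v \in c) & 3 <= size c],
      (forall x y, x != y -> (maxclique adj [set x; y] <-> consec c x y)) &
      (forall Q, maxclique adj Q -> #|Q| != 2 ->
         forall x y, x \in Q -> y \in Q -> ~~ consec c x y)].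

Definition in_none (adj : rel V) (w : V) : Prop :=
  forall Q, inscribed adj Q -> w \notin Q.

(* the subpath of the rim starting at u and going k >= 1 steps forward
   (k+1 vertices), first end in P, last end in Q, internal vertices in
   no inscribed clique *)
Definition rimpath (adj : rel V) (c : seq V) (u : V) (k : nat)
    (P Q : {set V}) : Prop :=
  [/\ 0 < k < size c, u \in P, iter k (next c) u \in Q &
      forall j, 0 < j < k -> in_none adj (iter j (next c) u)].

Definition N1 adj c : Prop := forall A u k, inscribed adj A ->
  rimpath adj c u k A A -> ~~ odd k.+1 /\ 4 <= k.+1.

Definition N2 adj : Prop := forall A, inscribed adj A -> odd #|A|.

Definition N3 adj (xi : V) : Prop :=
  (forall A, inscribed adj A -> xi \in A) /\
  (forall A B, inscribed adj A -> inscribed adj B -> A != B ->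
     A :&: B = [set xi]).

(* A xi-paths: AB-paths whose end in B is xi *)
Definition N4 adj c (xi : V) : Prop := forall A B u k,
  inscribed adj A -> inscribed adj B ->
  ((rimpath adj c u k A B /\ iter k (next c) u = xi) \/
   (rimpath adj c u k B A /\ u = xi)) ->
  ~~ odd k.+1.

Definition N5 adj c (xi : V) : Prop := forall A B u k,
  inscribed adj A -> inscribed adj B -> A != B ->
  rimpath adj c u k A B -> u <> xi -> iter k (next c) u <> xi ->
  odd k.+1.

Definition Ncond (adj : rel V) (c : seq V) : Prop :=
  N1 adj c /\ N2 adj /\ exists xi, [/\ N3 adj xi, N4 adj c xi & N5 adj c xi].

Definition del_cliques (adj : rel V) (S : {set {set V}}) : rel V :=
  fun x y => adj x y && ~~ [exists Q in S, (x \in Q) && (y \in Q)].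

Definition sunoid (adj : rel V) (c : seq V) : Prop :=
  [/\ multisun adj c, Ncond adj c &
      forall S : {set {set V}},
        (forall Q, Q \in S -> inscribed adj Q) ->
        (exists Q, inscribed adj Q /\ Q \notin S) ->
        Ncond (del_cliques adj S) c].

(* labels: None = eps, Some None = sigma, Some (Some X) = letter of X *)
Definition label (adj : rel V) (v : V) : option (option {set V}) :=
  let K := [set Q : {set V} | inscribed adj Q && (v \in Q)] in
  if 2 <= #|K| then Some None
  else if [pick Q in K] is Some Q then Some (Some Q) else None.

Definition rimword (adj : rel V) (c : seq V) : seq (option (option {set V})) :=
  map (label adj) c.

End Graphs.

From Pilot Require Import Defs.
From mathcomp Require Import all_boot zify.
Set Implicit Arguments. Unset Strict Implicit. Unset Printing Implicit Defensive.

(* Read the rim from [xi], labelled sigma, in one direction.  For an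
   inscribed clique [A], N1 in the sub-multisun keeping only [A] (which
   contains [xi]) makes all gaps between consecutive occurrences of the letter
   of [A] odd, counting both ends of the reading; N5 in the sub-multisun
   keeping only [A] and [B] makes the gap from an [A] to the next [B] even.
   These parities force, for any two letters, that the occurrences of one pair
   up into intervals containing all occurrences of the other: one letter
   encloses the other.  An enclosed letter lies strictly inside an interval of
   its encloser, so it is farther from sigma and comes later in the induced
   order; hence the induced order is the enclosure order.  Two letters
   adjacent in the word then form a cover pair, because a letter strictly
   between them in the order would have to change its count parity between
   two adjacent positions. *)

Section Enclosure.
Variables (A : eqType) (eps : A).

Fixpoint encl_from (x y : A) (px py : bool) (s : seq A) : bool :=
  if s is a :: s' then
    [&& (a == y) ==> px, (a == x) ==> ~~ py &
        encl_from x y (px (+) (a == x)) (py (+) (a == y)) s']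
  else ~~ px.

(* Pairing the [x]'s of [s] consecutively, every [y] lies inside a pair and
   no [x] inside a pair of [y]'s. *)
Definition encloses x y s := encl_from x y false false s.

Lemma encl_from_filter x y px py s :
  encl_from x y px py [seq a <- s | (a == x) || (a == y)] = encl_from x y px py s.
Proof.
elim: s px py => [|a s IH] px py //=.
case: ifP => H /=; first by rewrite IH.
move/negbT: H; rewrite negb_or => /andP[/negbTE -> /negbTE ->] /=.
by rewrite !addbF IH.
Qed.

Lemma encloses_eq_filter x y s1 s2 :
  [seq a <- s1 | (a == x) || (a == y)] = [seq a <- s2 | (a == x) || (a == y)] ->
  encloses x y s1 = encloses x y s2.
Proof. by rewrite /encloses -encl_from_filter => ->; rewrite encl_from_filter. Qed.

Lemma encl_fromP x y px py s d :
  encl_from x y px py s <->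
  [/\ px (+) odd (count_mem x s) = false,
      forall j, j < size s -> nth d s j = y -> px (+) odd (count_mem x (take j s)) &
      forall j, j < size s -> nth d s j = x -> ~~ (py (+) odd (count_mem y (take j s)))].
Proof.
elim: s px py => [|a s IH] px py /=.
  by rewrite addbF; split=> [/negbTE|[]->].
split.
- case/and3P => H1 H2 /IH [K1 K2 K3]; split.
  + by rewrite oddD oddb addbA K1.
  + case=> [|j] /= Hj; first by move=> E; move: H1; rewrite E eqxx addbF.
    by move=> /K2 -/(_ Hj); rewrite oddD oddb addbA.
  + case=> [|j] /= Hj; first by move=> E; move: H2; rewrite E eqxx addbF.
    by move=> /K3 -/(_ Hj); rewrite oddD oddb addbA.
- move=> [K1 K2 K3]; apply/and3P; split.
  + by apply/implyP => /eqP E; move: (K2 0 erefl E); rewrite /= addbF.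
  + by apply/implyP => /eqP E; move: (K3 0 erefl E); rewrite /= addbF.
  + apply/IH; split; first by move: K1; rewrite /= oddD oddb addbA.
      by move=> j Hj E; move: (K2 j.+1 Hj E); rewrite /= oddD oddb addbA.
    by move=> j Hj E; move: (K3 j.+1 Hj E); rewrite /= oddD oddb addbA.
Qed.

Lemma enclosesP x y s d :
  encloses x y s <->
  [/\ ~~ odd (count_mem x s),
      forall j, j < size s -> nth d s j = y -> odd (count_mem x (take j s)) &
      forall j, j < size s -> nth d s j = x -> ~~ odd (count_mem y (take j s))].
Proof.
rewrite /encloses (encl_fromP _ _ _ _ _ d) /=.
by split=> -[K1 K2 K3]; split=> //; [exact: negbT|exact: negbTE].
Qed.

Lemma encloses_between x y s j : x != y -> encloses x y s -> j < size s ->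
  nth eps s j = y ->
  exists i1 i2, [/\ i1 < j < i2, i2 < size s, nth eps s i1 = x & nth eps s i2 = x].
Proof.
move=> Nxy /(enclosesP _ _ _ eps) [Kend Ky _] Hj Ej.
have Hodd := Ky j Hj Ej.
have Xt : x \in take j s by rewrite -has_pred1 has_count (odd_gt0 Hodd).
have Xd : x \in drop j s.
  rewrite -has_pred1 has_count; apply: odd_gt0.
  move: Kend; rewrite -{1}(cat_take_drop j s) count_cat oddD Hodd.
  by case: (odd _).
have Hsj : size (take j s) = j by rewrite size_take Hj.
have I1 : index x (take j s) < j by move: Xt; rewrite -index_mem Hsj.
have I2 : index x (drop j s) < size s - j by move: Xd; rewrite -index_mem size_drop.
have E2 : nth eps s (j + index x (drop j s)) = x by rewrite -nth_drop nth_index.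
exists (index x (take j s)), (j + index x (drop j s)); split.
- rewrite I1 /=; case E0: (index x (drop j s)) => [|k]; last by lia.
  by move: E2; rewrite E0 addn0 Ej => /eqP; rewrite eq_sym (negbTE Nxy).
- lia.
- by rewrite -(nth_take _ I1) nth_index.
- exact: E2.
Qed.

Lemma foldr_minn_le N l e : e \in l -> foldr minn N l <= e.
Proof.
elim: l => [|a l IH] //=; rewrite in_cons => /orP[/eqP->|/IH H].
  exact: geq_minl.
exact: leq_trans (geq_minr _ _) H.
Qed.

Lemma foldr_minn_gt N l m : m < N -> all (fun e => m < e) l -> m < foldr minn N l.
Proof.
move=> HN; elim: l => [|a l IH] //= /andP[Ha Hl].
by rewrite ltn_min Ha IH.
Qed.

Lemma mindist_le v x j : j < size v -> nth eps v j = x ->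
  mindist eps v x <= minn j (size v - j).
Proof.
move=> Hj E; rewrite /mindist; apply: foldr_minn_le.
apply/mapP; exists j => //; rewrite mem_filter mem_iota /= E eqxx; lia.
Qed.

Lemma mindist_gt v x m : m < size v ->
  (forall j, j < size v -> nth eps v j = x -> m < minn j (size v - j)) ->
  m < mindist eps v x.
Proof.
move=> HN H; rewrite /mindist; apply: foldr_minn_gt => //.
apply/allP => e /mapP [j]; rewrite mem_filter mem_iota => /andP[/eqP E /andP[_ Hj]] ->.
apply: H => //; lia.
Qed.

(* Each [y] sits strictly inside an [x]-interval, whose ends are both
   cyclically closer to position [0]. *)
Lemma mindist_encloses v x y : x != y -> encloses x y v -> y \in v ->
  mindist eps v x < mindist eps v y.
Proof.
move=> Nxy Hxy Yv; have Hy : index y v < size v by rewrite index_mem.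
have [i1 [i2 [/andP[A1 A2] A3 A4 A5]]] :=
  encloses_between Nxy Hxy Hy (nth_index eps Yv).
have Hm := mindist_le (ltn_trans A1 Hy) A4.
apply: mindist_gt; first by apply: leq_ltn_trans Hm _; apply: leq_ltn_trans (geq_minl _ _) _; lia.
move=> j Hj Ej.
have [k1 [k2 [/andP[B1 B2] B3 B4 B5]]] := encloses_between Nxy Hxy Hj Ej.
have M1 := mindist_le (ltn_trans B1 Hj) B4.
have M2 := mindist_le B3 B5.
rewrite ltn_min; apply/andP; split.
  by apply: leq_ltn_trans M1 _; apply: leq_ltn_trans (geq_minl _ _) _.
apply: leq_ltn_trans M2 _; apply: leq_ltn_trans (geq_minr _ _) _; lia.
Qed.

End Enclosure.

Lemma marked_ind (m : nat -> bool) (P : nat -> Prop) i0 :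
  m i0 -> P i0 ->
  (forall i j, i0 <= i -> i < j -> m i -> m j -> (forall l, i < l < j -> ~~ m l) ->
     P i -> P j) ->
  forall j, i0 <= j -> m j -> P j.
Proof.
move=> m0 P0 step.
have claim k : exists i, [/\ i0 <= i <= i0 + k, m i, P i &
                     forall l, i < l <= i0 + k -> ~~ m l].
  elim: k => [|k [i [H1 H2 H3 H4]]].
    by exists i0; split => //; [rewrite addn0 leqnn|move=> l; lia].
  case E: (m (i0 + k.+1)).
    exists (i0 + k.+1); split => //; first by rewrite leq_addr leqnn.
      apply: (step i) => //; first by case/andP: H1.
        by case/andP: H1 => _ H; rewrite addnS ltnS.
      move=> l /andP[Hl1 Hl2]; apply: H4; rewrite Hl1 /=; lia.
    move=> l; lia.
  exists i; split => //; first by case/andP: H1 => -> H /=; rewrite addnS; lia.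
  move=> l /andP[Hl1 Hl2].
  case: (ltngtP l (i0 + k.+1)) Hl2 => // [Hlt _|-> _]; last by rewrite E.
  by apply: H4; rewrite Hl1 /=; rewrite addnS ltnS in Hlt.
move=> j Hj mj; have [i [H1 H2 H3 H4]] := claim (j - i0).
rewrite (subnKC Hj) in H1 H4.
case/andP: H1 => _ Hij.
case: (ltngtP i j) Hij => // [Hlt _|<- //].
by move: (H4 j); rewrite Hlt leqnn mj => /(_ isT).
Qed.

Section ParityPattern.
Variables (A : eqType) (eps : A) (r : seq A).
Let n := size r.

Definition odd_gaps (Z : A) := forall i j, i < j -> j <= n ->
  (i == 0) || (nth eps r i == Z) -> (j == n) || (nth eps r j == Z) ->
  (forall l, i < l < j -> nth eps r l != Z) -> odd (j - i).

Definition even_cross_gaps (Z W : A) := forall i j, 0 < i -> i < j -> j < n ->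
  nth eps r i = Z -> nth eps r j = W ->
  (forall l, i < l < j -> (nth eps r l != Z) && (nth eps r l != W)) -> ~~ odd (j - i).

Let cnt Z i := count_mem Z (take i r).

Lemma count_take_succ Z i : Z != eps -> cnt Z i.+1 = cnt Z i + (nth eps r i == Z).
Proof.
move=> HZ; rewrite /cnt.
case: (ltnP i (size r)) => Hi.
  by rewrite (take_nth eps Hi) -cats1 count_cat /= addn0.
rewrite !take_oversize ?(leq_trans Hi) // nth_default //.
by rewrite eq_sym (negbTE HZ) addn0.
Qed.

Lemma count_take_gap Z i j : Z != eps -> i < j ->
  (forall l, i < l < j -> nth eps r l != Z) ->
  cnt Z j = cnt Z i + (nth eps r i == Z).
Proof.
move=> HZ; elim: j => [|j IH] // Hij Hb.
rewrite count_take_succ //.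
case: (ltngtP i j) Hij => [Hlt _|Hgt Hij|-> _] //; last by lia.
rewrite IH // ?(negbTE (Hb j _)) ?addn0 //; first by rewrite Hlt /=.
by move=> l /andP[H1 H2]; apply: Hb; rewrite H1 /=; lia.
Qed.

Lemma nth_neq_default_lt Z j : Z != eps -> nth eps r j = Z -> j < n.
Proof.
move=> HZ E; case: (ltnP j n) => // H.
by move: HZ; rewrite -E nth_default // eqxx.
Qed.

Hypothesis odd_n : odd n.

(* Along the occurrences of [Z], [i + cnt Z i] keeps its parity from one
   occurrence to the next, and it is odd at the first one. *)
Lemma odd_gaps_parity Z : Z != eps -> nth eps r 0 != Z -> odd_gaps Z ->
  (forall i, 0 < i -> nth eps r i = Z -> odd (i + cnt Z i)) /\ ~~ odd (count_mem Z r).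
Proof.
move=> HZ H0 gapZ.
pose m i := (i == 0) || (nth eps r i == Z) || (i == n).
pose P i := (i == 0) || odd (i + cnt Z i).
have key j : m j -> P j.
  apply: (marked_ind (m := m) (P := P) (i0 := 0)) => //.
  move=> i k _ Hik mi mk Hb Pi.
  have Hkn : k <= n.
    move: mk; rewrite /m => /orP[/orP[/eqP E|/eqP E]|/eqP E].
    - lia.
    - exact: ltnW (nth_neq_default_lt HZ E).
    - lia.
  have Hin : i != n by apply/eqP => E; lia.
  have Hmi : (i == 0) || (nth eps r i == Z).
    by move: mi; rewrite /m (negbTE Hin) orbF.
  have Hbl l : i < l < k -> nth eps r l != Z.
    by move=> Hl; move: (Hb l Hl); rewrite /m !negb_or => /andP[/andP[_ ->]].
  have Hodd : odd (k - i).
    apply: gapZ => //.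
    move: mk; rewrite /m => /orP[/orP[/eqP E|->]|->] //; [lia|by rewrite orbT].
  have Ek : odd k = odd (k - i) (+) odd i.
    by rewrite oddB ?(ltnW Hik) // -addbA addbb addbF.
  rewrite /P; apply/orP; right.
  rewrite oddD Ek (count_take_gap HZ Hik Hbl) oddD oddb Hodd.
  case/orP: Hmi => [/eqP Ei0|HiZ].
    by rewrite Ei0 (negbTE H0) /cnt take0.
  rewrite HiZ.
  have Hi0 : i != 0 by apply/eqP => E; move: H0; rewrite -E HiZ.
  move: Pi; rewrite /P (negbTE Hi0) /= oddD.
  by case: (odd i); case: (odd (cnt Z i)).
split.
  move=> i Hi E; have := key i; rewrite /m /P E eqxx orbT => /(_ isT).
  by case: eqP Hi => [->|].
have := key n; rewrite /m /P eqxx !orbT => /(_ isT).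
case: eqP => [En|_] /=; first by move: odd_n; rewrite En.
rewrite /cnt take_oversize // oddD odd_n.
by case: odd.
Qed.

Variables X Y : A.
Hypotheses (HXe : X != eps) (HYe : Y != eps) (HXY : X != Y).
Hypotheses (H0X : nth eps r 0 != X) (H0Y : nth eps r 0 != Y).
Hypotheses (gapX : odd_gaps X) (gapY : odd_gaps Y).
Hypotheses (gapXY : even_cross_gaps X Y) (gapYX : even_cross_gaps Y X).

Let marked i := (nth eps r i == X) || (nth eps r i == Y).
(* Constant along the occurrences of [X] and [Y]: across each gap, the gap
   conditions cancel the change of [odd i] against the letter just passed. *)
Let parity_bit i :=
  odd i (+) odd (cnt X i) (+) odd (cnt Y i) (+) (nth eps r i == X).

Lemma marked_pos i : marked i -> 0 < i.
Proof.
by case: i => // /orP[/eqP E|/eqP E]; [move: H0X|move: H0Y]; rewrite E eqxx.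
Qed.

Lemma marked_lt i : marked i -> i < n.
Proof.
by case/orP=> /eqP E; [apply: nth_neq_default_lt HXe E|apply: nth_neq_default_lt HYe E].
Qed.

Lemma parity_bit_step i j : i < j -> marked i -> marked j ->
  (forall l, i < l < j -> ~~ marked l) -> parity_bit j = parity_bit i.
Proof.
move=> Hij mi mj Hb.
have Hjn := marked_lt mj; have Hi0 := marked_pos mi.
have HbXY l : i < l < j -> (nth eps r l != X) && (nth eps r l != Y).
  by move=> Hl; move: (Hb l Hl); rewrite /marked negb_or.
have HbYX l : i < l < j -> (nth eps r l != Y) && (nth eps r l != X).
  by move=> Hl; rewrite andbC; apply: HbXY.
have HbX l : i < l < j -> nth eps r l != X by move=> /HbXY /andP[].
have HbY l : i < l < j -> nth eps r l != Y by move=> /HbXY /andP[].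
have Ej : odd j = odd (j - i) (+) odd i by rewrite oddB ?(ltnW Hij) // -addbA addbb addbF.
rewrite /parity_bit Ej (count_take_gap HXe Hij HbX) (count_take_gap HYe Hij HbY).
rewrite !oddD !oddb.
move: (odd i) (odd (cnt X i)) (odd (cnt Y i)) => a b c.
have HYX : Y != X by rewrite eq_sym.
case/orP: mi => /eqP Ei; case/orP: mj => /eqP Ejj;
  rewrite Ei Ejj ?eqxx ?(negbTE HXY) ?(negbTE HYX).
- have := gapX Hij (ltnW Hjn); rewrite Ei Ejj eqxx !orbT => /(_ isT isT HbX) ->.
  by case: a; case: b; case: c.
- rewrite (negbTE (gapXY Hi0 Hij Hjn Ei Ejj HbXY)).
  by case: a; case: b; case: c.
- rewrite (negbTE (gapYX Hi0 Hij Hjn Ei Ejj HbYX)).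
  by case: a; case: b; case: c.
- have := gapY Hij (ltnW Hjn); rewrite Ei Ejj eqxx !orbT => /(_ isT isT HbY) ->.
  by case: a; case: b; case: c.
Qed.

Lemma parity_bit_const : exists b, forall i, marked i -> parity_bit i = b.
Proof.
have [/hasP[i0 _ m0]|Hno] := boolP (has marked (iota 0 n)); last first.
  exists false => i mi; case/hasP: Hno; exists i => //.
  by rewrite mem_iota marked_lt.
have from_i0 i j : i <= j -> marked i -> marked j -> parity_bit j = parity_bit i.
  move=> Hij mi mj.
  apply: (marked_ind (P := fun k => parity_bit k = parity_bit i) mi) => //.
  by move=> k l _ Hkl mk ml Hb <-; apply: parity_bit_step.
exists (parity_bit i0) => i mi.
case: (leqP i0 i) => H; first exact: from_i0.
by rewrite (from_i0 i i0 (ltnW H)).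
Qed.

(* The constant parity bit decides which of [X], [Y] encloses the other. *)
Lemma odd_gaps_encloses : encloses X Y r \/ encloses Y X r.
Proof.
have [parX evX] := odd_gaps_parity HXe H0X gapX.
have [parY evY] := odd_gaps_parity HYe H0Y gapY.
have [b Hb] := parity_bit_const.
have HYX : Y != X by rewrite eq_sym.
have atX j : nth eps r j = X -> odd (cnt Y j) = b.
  move=> E; have mj : marked j by rewrite /marked E eqxx.
  have := Hb j mj; have := parX j (marked_pos mj) E.
  rewrite /parity_bit E eqxx oddD.
  by case: (odd j); case: (odd (cnt X j)); case: (odd (cnt Y j)) => // _ <-.
have atY j : nth eps r j = Y -> odd (cnt X j) = ~~ b.
  move=> E; have mj : marked j by rewrite /marked E eqxx orbT.
  have := Hb j mj; have := parY j (marked_pos mj) E.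
  rewrite /parity_bit E (negbTE HYX) oddD.
  by case: (odd j); case: (odd (cnt X j)); case: (odd (cnt Y j)) => // _ <-.
case: b {Hb} atX atY => atX atY; [right|left]; apply/(enclosesP _ _ _ eps).
  by split=> // j _ E; [rewrite atX|rewrite atY].
by split=> // j _ E; [rewrite atY|rewrite atX].
Qed.

End ParityPattern.

Section Reductions.
Variables (A : eqType) (eps sig : A).

Lemma filter_pattern s :
  filter (predC1 eps) (pattern eps s) = filter (predC1 eps) s.
Proof.
elim: s => [|x s IH] //.
rewrite /pattern /= -/(pattern eps s).
case E: (pattern eps s) => [|y t]; first by rewrite -IH E.
case: ifP => [/andP[/eqP Hx /eqP Hy]|_].
  by rewrite Hx /= eqxx -IH E /= Hy eqxx.
by rewrite /= -IH E.
Qed.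

Lemma filter_expand u :
  filter (predC1 eps) (expand eps sig u) = filter (predC1 eps) u.
Proof.
elim: u => [|x u IH] //.
case: u IH => [|y u] IH //=.
case: ifP => _ /=; last by rewrite IH.
by rewrite eqxx /= IH.
Qed.

End Reductions.

Fixpoint prop_path (T : Type) (R : T -> T -> Prop) x s : Prop :=
  if s is y :: s' then R x y /\ prop_path R y s' else True.

Lemma prop_path_collapse (T : eqType) (R : T -> T -> Prop) x s z :
  prop_path R x (rcons s z) -> prop_path R x (rcons (collapse s) z).
Proof.
elim: s x => [|a s IH] x //.
case: s IH => [|b s] IH //= [Hxa Hrest].
case: ifP => [/eqP Eab|_]; last by split => //; apply: IH.
by subst b; apply: IH; split => //; case: Hrest.
Qed.

Lemma prop_pathP (T : Type) (R : T -> T -> Prop) x s :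
  prop_path R x s <-> forall i, i < size s -> R (nth x (x :: s) i) (nth x s i).
Proof.
elim: s x => [|a s IH] x /=; first by split.
have E1 i : i <= size s -> nth x (a :: s) i = nth a (a :: s) i.
  by case: i => //= i Hi; apply: set_nth_default.
split.
  move=> [Hxa /IH H] [|i] Hi //=.
  by rewrite E1 1?ltnW // (set_nth_default a) //; apply: H.
move=> H; split; first exact: (H 0).
apply/IH => i Hi.
by have := H i.+1 Hi; rewrite /= E1 1?ltnW // (set_nth_default a).
Qed.

Section LetterOrder.
Variables (A : eqType) (eps sig : A) (t : seq A).
Hypotheses (Hes : eps != sig) (Hsig : sig \notin t).
Hypothesis encl_dich : forall x y, x \in t -> y \in t -> x != eps -> y != eps ->
  x != y -> encloses x y (sig :: t) \/ encloses y x (sig :: t).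

Let u := pattern eps t.
Let f := filter (predC1 eps) t.
Let v := vword eps sig u.

Lemma filter_vword : filter (predC1 eps) v = sig :: f.
Proof.
rewrite /v /vword /= eq_sym Hes eqxx /= filter_cat filter_expand filter_pattern /=.
by rewrite eqxx cats0.
Qed.

Lemma mem_f a : (a \in f) = (a \in t) && (a != eps).
Proof. by rewrite mem_filter andbC. Qed.

Lemma f_neq_eps a : a \in f -> a != eps.
Proof. by rewrite mem_f => /andP[]. Qed.

Lemma f_neq_sig a : a \in f -> a != sig.
Proof. by rewrite mem_f => /andP[H _]; apply/eqP => E; move: Hsig; rewrite -E H. Qed.

Lemma mem_v a : a != eps -> (a \in v) = (a == sig) || (a \in f).
Proof.
move=> Ha.
have : (a \in filter (predC1 eps) v) = (a \in v) by rewrite mem_filter /= Ha.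
by rewrite filter_vword in_cons => <-.
Qed.

Lemma f_sub_v a : a \in f -> a \in v.
Proof. by move=> H; rewrite mem_v ?f_neq_eps // H orbT. Qed.

Lemma filter_pair_f x y : x \in f -> y \in f ->
  let P := fun a => (a == x) || (a == y) in
  filter P f = filter P (sig :: t) /\ filter P v = filter P f.
Proof.
move=> Hx Hy P.
have Psig : P sig = false.
  by rewrite /P; apply/negbTE; rewrite negb_or !(eq_sym sig) f_neq_sig ?f_neq_sig.
have Peps : P eps = false.
  by rewrite /P; apply/negbTE; rewrite negb_or !(eq_sym eps) f_neq_eps ?f_neq_eps.
have Pn a : P a -> a != eps by move=> Pa; apply/eqP => E; move: Pa; rewrite E Peps.
split.
  rewrite /= Psig /f -filter_predI; apply: eq_filter => a /=.
  by apply: andb_idr => /Pn.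
have -> : filter P v = filter P (filter (predC1 eps) v).
  rewrite -filter_predI; apply: eq_filter => a /=.
  by apply/esym; apply: andb_idr => /Pn.
by rewrite filter_vword /= Psig.
Qed.

Lemma encloses_f_dich x y : x \in f -> y \in f -> x != y ->
  encloses x y f \/ encloses y x f.
Proof.
move=> Hx Hy Nxy.
have [E1 _] := filter_pair_f Hx Hy; have [E2 _] := filter_pair_f Hy Hx.
have [Hxt Nxe] : x \in t /\ x != eps by apply/andP; rewrite -mem_f.
have [Hyt Nye] : y \in t /\ y != eps by apply/andP; rewrite -mem_f.
rewrite (encloses_eq_filter E1) (encloses_eq_filter E2).
exact: encl_dich.
Qed.

Lemma encloses_mindist x y : x \in f -> y \in f -> x != y -> encloses x y f ->
  mindist eps v x < mindist eps v y.
Proof.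
move=> Hx Hy Nxy H.
have [_ E] := filter_pair_f Hx Hy.
by apply: mindist_encloses => //; [rewrite (encloses_eq_filter E)|exact: f_sub_v].
Qed.

Lemma prec_to_sig z : ~ prec eps sig v z sig.
Proof. by case=> _ _ _ _ [[_ []]|[_ []]]. Qed.

Lemma prec_asym a b : prec eps sig v a b -> ~ prec eps sig v b a.
Proof.
case=> _ _ _ _ [[Ea Nb]|[Na Nb _ L1]]; case=> _ _ _ _ [[Eb Na']|[Nb' Na' _ L2]] //.
by move: (ltn_trans L1 L2); rewrite ltnn.
Qed.

Lemma prec_mem_f z y : prec eps sig v z y -> z != sig -> z \in f.
Proof. by case=> Hz _ Hzv _ _ Nz; move: Hzv; rewrite mem_v // (negbTE Nz). Qed.

Lemma prec_mindist x y : x != sig -> prec eps sig v x y ->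
  mindist eps v x < mindist eps v y.
Proof. by move=> Nx [_ _ _ _ [[E _]|[_ _ _ L]]] //; move: Nx; rewrite E eqxx. Qed.

Lemma prec_encloses x y : x \in f -> y \in f -> x != y -> prec eps sig v x y ->
  encloses x y f.
Proof.
move=> Hx Hy Nxy P.
case: (encloses_f_dich Hx Hy Nxy) => // H.
have L1 := prec_mindist (f_neq_sig Hx) P.
have Nyx : y != x by rewrite eq_sym.
have L2 := encloses_mindist Hy Hx Nyx H.
by move: (ltn_trans L1 L2); rewrite ltnn.
Qed.

Lemma encloses_prec x y : x \in f -> y \in f -> x != y -> encloses x y f ->
  prec eps sig v x y.
Proof.
move=> Hx Hy Nxy H; split; rewrite ?f_neq_eps ?f_sub_v //; right.
by split; [apply/eqP; exact: f_neq_sig|apply/eqP; exact: f_neq_sig|exact/eqP|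
           exact: encloses_mindist].
Qed.

Lemma cover_pair_refl a : cover_pair eps sig v a a.
Proof.
left; split; first by left.
by case=> z [_ _ _ H1 H2]; apply: (prec_asym H1 H2).
Qed.

Lemma cover_sig a : a \in f -> (forall z, z \in f -> z != a -> ~ encloses z a f) ->
  Defs.cover eps sig v sig a.
Proof.
move=> Ha Hz; split.
  right; split.
  - by rewrite eq_sym.
  - exact: f_neq_eps.
  - by rewrite mem_v ?eqxx // eq_sym.
  - exact: f_sub_v.
  - by left; split=> //; apply/eqP; exact: f_neq_sig.
case=> z [Nze Nzs Nza P1 P2].
have Zf : z \in f by apply: (prec_mem_f P2); apply/eqP.
have Nza' : z != a by apply/eqP.
case: (encloses_f_dich Zf Ha Nza') => H; first exact: (Hz z Zf Nza' H).
have Naz : a != z by rewrite eq_sym.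
have := ltn_trans (prec_mindist (f_neq_sig Zf) P2) (encloses_mindist Ha Zf Naz H).
by rewrite ltnn.
Qed.

(* Between two adjacent letters of [f] the parity of the number of [z]'s does
   not change, while enclosure forces it to differ at the two positions. *)
Lemma adjacent_not_separated a b z i : i.+1 < size f -> z != nth sig f i ->
  (a = nth sig f i /\ b = nth sig f i.+1) \/ (a = nth sig f i.+1 /\ b = nth sig f i) ->
  encloses a z f -> ~ encloses z b f.
Proof.
move=> Hi Nz Hab /(enclosesP _ _ _ sig) [_ _ Ka] /(enclosesP _ _ _ sig) [_ Kb _].
have Ect : count_mem z (take i.+1 f) = count_mem z (take i f).
  by rewrite (take_nth sig (ltnW Hi)) -cats1 count_cat /= eq_sym (negbTE Nz) !addn0.
case: Hab => [[Ea Eb]|[Ea Eb]].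
  by move: (Ka i (ltnW Hi) (esym Ea)); rewrite -Ect (Kb i.+1 Hi (esym Eb)).
by move: (Ka i.+1 Hi (esym Ea)); rewrite Ect (Kb i (ltnW Hi) (esym Eb)).
Qed.

Lemma adjacent_cover x y i : i.+1 < size f -> x != y ->
  (x = nth sig f i /\ y = nth sig f i.+1) \/ (x = nth sig f i.+1 /\ y = nth sig f i) ->
  encloses x y f -> Defs.cover eps sig v x y.
Proof.
move=> Hi Nxy Hxy H.
have Hmem k : k < size f -> nth sig f k \in f by move=> Hk; apply: mem_nth.
have [Hx Hy] : x \in f /\ y \in f.
  by case: Hxy => -[-> ->]; rewrite !Hmem // ltnW.
split; first by right; apply: encloses_prec.
case=> z [Nze Nzx Nzy P1 P2].
have Nzs : z != sig by apply/eqP => E; rewrite E in P1; exact: prec_to_sig P1.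
have Zf := prec_mem_f P2 Nzs.
have Nxz : x != z by apply/eqP => E; apply: Nzx.
have Nzy' : z != y by apply/eqP.
have Nzi : z != nth sig f i.
  by case: Hxy => -[Ex Ey]; [rewrite -Ex eq_sym|rewrite -Ey; apply/eqP].
exact: (adjacent_not_separated Hi Nzi Hxy (prec_encloses Hx Zf Nxz P1)
          (prec_encloses Zf Hy Nzy' P2)).
Qed.

Lemma cover_pair_adjacent i : i.+1 < size f ->
  cover_pair eps sig v (nth sig f i) (nth sig f i.+1).
Proof.
move=> Hi; set x := nth sig f i; set y := nth sig f i.+1.
have [<-|Nxy] := eqVneq x y; first exact: cover_pair_refl.
have [Hx Hy] : x \in f /\ y \in f by split; apply: mem_nth; rewrite // ltnW.
case: (encloses_f_dich Hx Hy Nxy) => H; [left|right].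
  by apply: (adjacent_cover (i := i)) => //; left.
by apply: (adjacent_cover (i := i)) => //; [rewrite eq_sym|right].
Qed.

Lemma cover_path : prop_path (cover_pair eps sig v) sig (rcons f sig).
Proof.
apply/prop_pathP => i; rewrite size_rcons ltnS => Hi.
have -> : nth sig (sig :: rcons f sig) i = nth sig (sig :: f) i.
  by case: i Hi => // i Hi /=; rewrite nth_rcons_default.
rewrite nth_rcons_default.
case: i Hi => [|k] Hk /=.
  case Ef: f => [|a f'] /=; first exact: cover_pair_refl.
  left; apply: cover_sig; first by rewrite Ef mem_head.
  move=> z _ _ /(enclosesP _ _ _ sig) [_ K _].
  by have := K 0; rewrite Ef => /(_ isT erefl).
case: (ltngtP k.+1 (size f)) Hk => // [Hlt _|Eq _]; first exact: cover_pair_adjacent.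
rewrite (nth_default _ (eq_leq (esym Eq))).
have Ha : nth sig f k \in f by apply: mem_nth; rewrite -Eq.
right; apply: cover_sig => // z Zf Nza /(enclosesP _ _ _ sig) [Kend K _].
have Hk : k < size f by rewrite -Eq.
have Ec : count_mem z f = count_mem z (take k f).
  rewrite -{1}(cat_take_drop k f) count_cat (drop_nth sig Hk) drop_oversize ?Eq //=.
  by rewrite eq_sym (negbTE Nza) !addn0.
by move: (K k Hk erefl); rewrite -Ec (negbTE Kend).
Qed.

Lemma jump_free_rep_pattern : jump_free_rep eps sig u.
Proof.
rewrite /jump_free_rep /letters -/v filter_pattern -/f => i Hi.
have Hmod : nth sig (sig :: collapse f) (i.+1 %% size (sig :: collapse f)) =
            nth sig (rcons (collapse f) sig) i.
  rewrite nth_rcons_default.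
  case: (ltngtP i.+1 (size (sig :: collapse f))) Hi => // [Hlt _|Eq _].
    by rewrite modn_small.
  by rewrite Eq modnn /= nth_default //; move: Eq => /= [->].
rewrite Hmod; have := (prop_pathP _ _ _).1 (prop_path_collapse cover_path) i.
rewrite size_rcons => /(_ Hi).
suff -> : nth sig (sig :: rcons (collapse f) sig) i = nth sig (sig :: collapse f) i by [].
by case: i Hi {Hmod} => // i Hi /=; rewrite nth_rcons_default.
Qed.

End LetterOrder.

Lemma next_neq (T : eqType) (c : seq T) v : uniq c -> v \in c -> 1 < size c ->
  v != next c v.
Proof.
case: c => [|y p] // U Hv Hs.
have Hi : index v (y :: p) < (size p).+1 by rewrite -[(size p).+1]/(size (y :: p)) index_mem.
have Ev : nth y (y :: p) (index v (y :: p)) = v by rewrite nth_index.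
rewrite next_nth Hv; move: Hi Ev; set i := index v (y :: p) => Hi Ev /=.
case: (ltngtP i (size p)) Hi => [Hlt _|Hgt Hi|Eq _]; first 2 last.
- rewrite Eq nth_default //.
  have : nth y (y :: p) i != nth y (y :: p) 0.
    by rewrite nth_uniq //= ?Eq //; move: Hs => /=; case: (size p).
  by rewrite Ev.
- have : nth y (y :: p) i != nth y (y :: p) i.+1.
    by rewrite nth_uniq //= ?ltnS ?(ltnW Hlt) // eqn_leq ltnn andbF.
  by rewrite Ev.
- lia.
Qed.

Section Cliques.
Variable V : finType.

Lemma cliqueP (a : rel V) (Q : {set V}) :
  reflect (forall x y, x \in Q -> y \in Q -> x != y -> a x y) (clique a Q).
Proof.
apply: (iffP forall_inP) => H.
  by move=> x y Hx Hy Nxy; move: (H x Hx) => /forall_inP /(_ y Hy) /implyP; apply.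
by move=> x Hx; apply/forall_inP => y Hy; apply/implyP; apply: H.
Qed.

Lemma maxclique_proper (a : rel V) (Q Q' : {set V}) :
  maxclique a Q -> Q \proper Q' -> ~~ clique a Q'.
Proof. by case/andP => _ /forallP /(_ Q') /implyP. Qed.

Lemma maxcliqueW (a : rel V) (Q : {set V}) : maxclique a Q -> clique a Q.
Proof. by case/andP. Qed.

Lemma clique_mono (a b : rel V) (Q : {set V}) :
  subrel a b -> clique a Q -> clique b Q.
Proof.
by move=> ab /cliqueP H; apply/cliqueP => x y Hx Hy Nxy; apply/ab/H.
Qed.

Lemma del_cliques_sub (a : rel V) S : subrel (del_cliques a S) a.
Proof. by move=> x y /andP[]. Qed.

End Cliques.

Section Deletion.
Variables (V : finType) (adj : rel V) (c : seq V) (xi : V).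
Hypotheses (c_uniq : uniq c) (c_all : forall v, v \in c) (c_size : 2 < size c).
Hypothesis rim_edges : forall x y, x != y ->
  (maxclique adj [set x; y] <-> consec c x y).
Hypothesis inscribed_nonconsec : forall Q, maxclique adj Q -> #|Q| != 2 ->
  forall x y, x \in Q -> y \in Q -> ~~ consec c x y.
Hypothesis N3xi : N3 adj xi.

Lemma inscribed_inter A B x : inscribed adj A -> inscribed adj B -> A != B ->
  x \in A -> x \in B -> x = xi.
Proof.
move=> IA IB NAB HA HB.
have : x \in A :&: B by rewrite inE HA HB.
by rewrite N3xi.2 // inE => /eqP.
Qed.

Variable S : {set {set V}}.
Hypothesis S_inscribed : forall Q, Q \in S -> inscribed adj Q.
Let adj' := del_cliques adj S.

(* Distinct inscribed cliques share only [xi], so no edge of a surviving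
   clique lies in a deleted one. *)
Lemma clique_del Q : inscribed adj Q -> Q \notin S -> clique adj' Q.
Proof.
move=> IQ NQ; have CQ := maxcliqueW (andP IQ).1.
apply/cliqueP => x y Hx Hy Nxy; apply/andP; split; first by move/cliqueP: CQ; apply.
apply/existsP => -[Q' /andP[HQ' /andP[Hx' Hy']]].
have NQQ : Q != Q' by apply/eqP => E; move: NQ; rewrite E HQ'.
have IQ' := S_inscribed HQ'.
move: Nxy; rewrite (inscribed_inter IQ IQ' NQQ Hx Hx').
by rewrite (inscribed_inter IQ IQ' NQQ Hy Hy') eqxx.
Qed.

Lemma inscribed_del Q : inscribed adj Q -> Q \notin S -> inscribed adj' Q.
Proof.
move=> IQ NQ; case/andP: (IQ) => MQ H2.
rewrite /inscribed H2 andbT /maxclique clique_del //=.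
apply/forallP => Q'; apply/implyP => HP; apply/negP.
by move/(clique_mono (@del_cliques_sub _ adj S)); apply/negP/(maxclique_proper MQ).
Qed.

Lemma rim_pair_clique_del v : clique adj' [set v; next c v].
Proof.
set w := next c v.
have Nvw : v != w by apply: next_neq; rewrite ?c_all // ltnW.
have Hc : consec c v w by rewrite /consec eqxx.
have Cvw := maxcliqueW ((rim_edges Nvw).2 Hc).
apply/cliqueP => x y Hx Hy Nxy.
have Avw : adj x y by move/cliqueP: Cvw; apply.
apply/andP; split => //.
apply/existsP => -[Q' /andP[HQ' /andP[Hx' Hy']]].
case/andP: (S_inscribed HQ') => MQ' N2.
have [Hv' Hw'] : v \in Q' /\ w \in Q'.
  move: Nxy Hx' Hy'; rewrite !inE in Hx Hy.
  by case/orP: Hx => /eqP ->; case/orP: Hy => /eqP ->; rewrite ?eqxx // => _ H1 H2.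
by move: (inscribed_nonconsec MQ' N2 Hv' Hw'); rewrite Hc.
Qed.

Lemma inscribed_del_card Q : inscribed adj' Q -> 1 < #|Q|.
Proof.
case/andP => MQ _; rewrite ltnNge; apply/negP => Hle.
have [v Hv] : exists v, Q \subset [set v].
  case: (set_0Vmem Q) => [->|[v Hv]]; first by exists xi; rewrite sub0set.
  exists v; apply/subsetP => z Hz; rewrite inE; apply/eqP.
  by move/card_le1_eqP: Hle => /(_ z v Hz Hv).
have Nvw : v != next c v by apply: next_neq; rewrite ?c_all // ltnW.
have : Q \proper [set v; next c v].
  rewrite properEcard cards2 Nvw ltnS Hle andbT.
  by apply: subset_trans Hv _; apply/subsetP => z; rewrite !inE => ->.
by move/(maxclique_proper MQ); rewrite rim_pair_clique_del.
Qed.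

(* A maximal clique of the deleted graph extends to a maximal clique of
   [adj], which must be an undeleted inscribed clique. *)
Lemma del_inscribed Q : inscribed adj' Q -> inscribed adj Q /\ Q \notin S.
Proof.
move=> IQ; have Hc2 := inscribed_del_card IQ.
case/andP: IQ => MQ H2.
have CQ := maxcliqueW MQ.
have [M /maxsetP [CM MM] QM] :=
  maxset_exists (P := clique adj) (clique_mono (@del_cliques_sub _ adj S) CQ).
have MCM : maxclique adj M.
  rewrite /maxclique CM /=; apply/forallP => B; apply/implyP => PB; apply/negP => CB.
  by move: (PB); rewrite (MM B CB (proper_sub PB)) properxx.
have IM : inscribed adj M.
  have := subset_leq_card QM.
  by rewrite /inscribed MCM /=; move: H2; case: (ltngtP 2 #|Q|) => //; lia.
have NMS : M \notin S.
  apply/negP => HMS.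
  have [x [y [Hx Hy Nxy]]] := card_gt1P Hc2.
  move/cliqueP: CQ => /(_ x y Hx Hy Nxy) /andP [_ /existsP []].
  by exists M; rewrite HMS (subsetP QM x Hx) (subsetP QM y Hy).
case: (eqVneq Q M) => [->|NQM] //.
have : Q \proper M by rewrite properEneq NQM QM.
by move/(maxclique_proper MQ); rewrite clique_del.
Qed.

End Deletion.

Definition keep_cliques (V : finType) (adj : rel V) (K : {set {set V}}) : rel V :=
  del_cliques adj [set Q | inscribed adj Q && (Q \notin K)].

Section Reading.
Variables (V : finType) (adj : rel V) (c : seq V) (xi : V).
Hypotheses (c_uniq : uniq c) (c_all : forall v, v \in c) (c_size : 2 < size c).
Hypothesis c_odd : odd (size c).
Hypothesis rim_edges : forall x y, x != y ->
  (maxclique adj [set x; y] <-> consec c x y).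
Hypothesis inscribed_nonconsec : forall Q, maxclique adj Q -> #|Q| != 2 ->
  forall x y, x \in Q -> y \in Q -> ~~ consec c x y.
Hypothesis N3xi : N3 adj xi.
Hypothesis sub_Ncond : forall S : {set {set V}},
  (forall Q, Q \in S -> inscribed adj Q) ->
  (exists Q, inscribed adj Q /\ Q \notin S) -> Ncond (del_cliques adj S) c.

Lemma keep_cliques_inscribed (K : {set {set V}}) Q : inscribed adj Q -> Q \in K ->
  inscribed (keep_cliques adj K) Q.
Proof.
move=> IQ QK; apply: (inscribed_del N3xi) => //; first by move=> Q'; rewrite inE => /andP[].
by rewrite inE QK andbF.
Qed.

Lemma keep_cliques_in_none (K : {set {set V}}) w : (forall Q, Q \in K -> w \notin Q) ->
  in_none (keep_cliques adj K) w.
Proof.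
move=> Hw Q /(del_inscribed c_uniq c_all c_size rim_edges inscribed_nonconsec N3xi) [].
  by move=> Q'; rewrite inE => /andP[].
by move=> IQ; rewrite inE IQ negbK; apply: Hw.
Qed.

Lemma keep_cliques_Ncond (K : {set {set V}}) Q : inscribed adj Q -> Q \in K ->
  Ncond (keep_cliques adj K) c.
Proof.
move=> IQ QK; apply: sub_Ncond; first by move=> Q'; rewrite inE => /andP[].
by exists Q; rewrite inE QK andbF.
Qed.

Lemma label_some v Q : label adj v = Some (Some Q) -> inscribed adj Q /\ v \in Q.
Proof.
rewrite /label; case: ifP => // _; case: pickP => // Q' HQ' [<-].
by move: HQ'; rewrite inE => /andP.
Qed.

Lemma label_sigma v : label adj v = Some None -> v = xi.
Proof.
rewrite /label; case: ifP => [H _|_]; last by case: pickP.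
have [Q1 [Q2 [H1 H2 N12]]] := card_gt1P H.
move: H1 H2; rewrite !inE => /andP[I1 V1] /andP[I2 V2].
exact: (inscribed_inter N3xi I1 I2 N12 V1 V2).
Qed.

Lemma label_inscribed A v : inscribed adj A -> v \in A -> v != xi ->
  label adj v = Some (Some A).
Proof.
move=> IA VA Nv; rewrite /label.
have Hle : #|[set Q | inscribed adj Q && (v \in Q)]| < 2.
  rewrite ltnNge; apply/negP => H.
  have [Q1 [Q2 [H1 H2 N12]]] := card_gt1P H.
  move: H1 H2; rewrite !inE => /andP[I1 V1] /andP[I2 V2].
  by move: Nv; rewrite (inscribed_inter N3xi I1 I2 N12 V1 V2) eqxx.
rewrite leqNgt Hle /=.
case: pickP => [Q|H0]; last by move: (H0 A); rewrite inE IA VA.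
rewrite inE => /andP[IQ VQ].
case: (eqVneq Q A) => [->|NQA] //.
by move: Nv; rewrite (inscribed_inter N3xi IQ IA NQA VQ VA) eqxx.
Qed.

Variable d : seq V.
Hypotheses (d_uniq : uniq d) (d_size : size d = size c) (d_head : nth xi d 0 = xi).
Hypothesis d_dir :
  (forall i, i < size c -> next c (nth xi d i) = nth xi d i.+1) \/
  (forall i, i < size c -> next c (nth xi d i.+1) = nth xi d i).
Let n := size c.
Let D i := nth xi d i.

Lemma D_end : D n = xi.
Proof. by rewrite /D nth_default // d_size. Qed.

Lemma D_neq_xi i : 0 < i < n -> D i != xi.
Proof.
move=> /andP[H1 H2]; rewrite /D -{2}d_head nth_uniq ?d_size //; first by apply/eqP; lia.
by rewrite /n in H2; lia.
Qed.

Lemma iter_next_forward i m : (forall i, i < n -> next c (D i) = D i.+1) ->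
  i + m <= n -> iter m (next c) (D i) = D (i + m).
Proof.
move=> Hf; elim: m => [|m IH] H; first by rewrite addn0.
by rewrite iterS IH ?Hf; [rewrite addnS| lia| lia].
Qed.

Lemma iter_next_backward j m : (forall i, i < n -> next c (D i.+1) = D i) ->
  m <= j -> j <= n -> iter m (next c) (D j) = D (j - m).
Proof.
move=> Hb; elim: m => [|m IH] H1 H2; first by rewrite subn0.
rewrite iterS IH; [|lia|lia].
have -> : j - m = (j - m.+1).+1 by lia.
by rewrite Hb; [|lia].
Qed.

Lemma rimpath_reading (a : rel V) (P Q : {set V}) i j :
  i < j -> j <= n -> j - i < n -> D i \in P -> D j \in Q ->
  (forall l, i < l < j -> in_none a (D l)) ->
  (rimpath a c (D i) (j - i) P Q /\ iter (j - i) (next c) (D i) = D j) \/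
  (rimpath a c (D j) (j - i) Q P /\ iter (j - i) (next c) (D j) = D i).
Proof.
move=> Hij Hjn Hk HP HQ Hin.
case: d_dir => [Hf|Hb]; [left|right].
  have E : iter (j - i) (next c) (D i) = D j.
    by rewrite (iter_next_forward Hf); [congr D; lia|lia].
  split => //; split; rewrite ?E //; first by apply/andP; split; lia.
  move=> m Hm; rewrite (iter_next_forward Hf); last by lia.
  by apply: Hin; lia.
have E : iter (j - i) (next c) (D j) = D i.
  by rewrite (iter_next_backward Hb); [congr D; lia|lia|lia].
split => //; split; rewrite ?E //; first by apply/andP; split; lia.
move=> m Hm; rewrite (iter_next_backward Hb); [|lia|lia].
by apply: Hin; lia.
Qed.

Let r := map (label adj) d.

Lemma nth_reading_letter A i : 0 < i -> nth None r i = Some (Some A) ->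
  i < n /\ D i \in A.
Proof.
move=> Hi; case: (ltnP i n) => Hin; last by rewrite nth_default // size_map d_size.
by rewrite (nth_map xi) ?d_size // => /label_some [].
Qed.

Lemma nth_reading_inscribed A i : inscribed adj A -> 0 < i < n -> D i \in A ->
  nth None r i = Some (Some A).
Proof.
move=> IA Hi HA; rewrite (nth_map xi) ?d_size; last by case/andP: Hi.
by apply: label_inscribed => //; apply: D_neq_xi.
Qed.

Lemma reading_between_in_none (K : {set {set V}}) i j :
  j <= n -> (forall Q, Q \in K -> inscribed adj Q) ->
  (forall l, i < l < j -> forall Q, Q \in K -> nth None r l != Some (Some Q)) ->
  forall l, i < l < j -> in_none (keep_cliques adj K) (D l).
Proof.
move=> Hjn IK Hb l Hl; apply: keep_cliques_in_none => Q QK; apply/negP => HlQ.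
by move: (Hb l Hl Q QK); rewrite (nth_reading_inscribed (IK Q QK)) ?eqxx //; lia.
Qed.

(* N1 in the sub-multisun keeping only [A]. *)
Lemma reading_odd_gaps A : inscribed adj A -> odd_gaps None r (Some (Some A)).
Proof.
move=> IA i j Hij Hjn Hi Hj Hb.
have [/andP[/eqP -> /eqP ->]|Hne] := boolP ((i == 0) && (j == size r)).
  by rewrite subn0 size_map d_size.
rewrite size_map d_size -/n in Hjn Hj Hne.
have Hk : j - i < n.
  move: Hne; rewrite negb_and => /orP[/negbTE|/negbTE] H.
    by move: Hi; rewrite H /= => /eqP /nth_reading_letter []; lia.
  by move: H => /eqP; lia.
have DiA : D i \in A.
  case: (posnP i) => [->|Hi0]; first by rewrite /D d_head N3xi.1.
  by case/orP: Hi => [/eqP E|/eqP /(nth_reading_letter Hi0) []//]; move: Hi0; rewrite E.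
have DjA : D j \in A.
  case/orP: Hj => [/eqP ->|/eqP /nth_reading_letter [] //]; first by rewrite D_end N3xi.1.
  by apply: leq_ltn_trans Hij.
have KA : A \in [set A] by rewrite inE.
have [N1A _] := keep_cliques_Ncond IA KA.
have Hin : forall l, i < l < j -> in_none (keep_cliques adj [set A]) (D l).
  apply: reading_between_in_none => // [Q|l Hl Q]; rewrite inE => /eqP -> //.
  exact: Hb.
have IAk := keep_cliques_inscribed IA KA.
by case: (rimpath_reading Hij Hjn Hk DiA DjA Hin) => -[/(N1A _ _ _ IAk) [] + _ _];
  rewrite /=; case: odd.
Qed.

(* N5 in the sub-multisun keeping only [A] and [B]. *)
Lemma reading_even_cross_gaps A B : inscribed adj A -> inscribed adj B -> A != B ->
  even_cross_gaps None r (Some (Some A)) (Some (Some B)).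
Proof.
move=> IA IB NAB i j Hi Hij Hjn Ri Rj Hb.
rewrite size_map d_size -/n in Hjn.
have KA : A \in [set A; B] by rewrite !inE eqxx.
have KB : B \in [set A; B] by rewrite !inE eqxx orbT.
have [_ [_ [xi' [[N3A _] _ N5]]]] := keep_cliques_Ncond IA KA.
have IAk := keep_cliques_inscribed IA KA.
have IBk := keep_cliques_inscribed IB KB.
have Exi : xi' = xi by apply: (inscribed_inter N3xi IA IB NAB); apply: N3A.
subst xi'.
have [_ DiA] := nth_reading_letter Hi Ri.
have [_ DjB] := nth_reading_letter (ltn_trans Hi Hij) Rj.
have Hin : forall l, i < l < j -> in_none (keep_cliques adj [set A; B]) (D l).
  apply: reading_between_in_none; first exact: ltnW.
    by move=> Q; rewrite !inE => /orP[] /eqP ->.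
  by move=> l Hl Q; rewrite !inE => /orP[] /eqP ->; case/andP: (Hb l Hl).
have Hk : j - i < n by clear -Hi Hij Hjn; lia.
have Nxi : D i <> xi by apply/eqP/D_neq_xi; clear -Hi Hij Hjn; lia.
have Nxj : D j <> xi by apply/eqP/D_neq_xi; clear -Hi Hij Hjn; lia.
case: (rimpath_reading Hij (ltnW Hjn) Hk DiA DjB Hin) => -[R E].
  by have := N5 _ _ _ _ IAk IBk NAB R Nxi; rewrite E => /(_ Nxj) /=; case: odd.
have NBA : B != A by rewrite eq_sym.
by have := N5 _ _ _ _ IBk IAk NBA R Nxj; rewrite E => /(_ Nxi) /=; case: odd.
Qed.

Lemma reading_letter z : z \in r -> z != None -> z != Some None ->
  exists2 A, z = Some (Some A) & inscribed adj A.
Proof.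
case/mapP => v _ ->; case Ev: (label adj v) => [[A|]|] // _ _.
by exists A => //; have [] := label_some Ev.
Qed.

Lemma reading_encloses_dich : label adj xi = Some None ->
  forall x y, x \in r -> y \in r -> x \notin [:: None; Some None] ->
  y \notin [:: None; Some None] -> x != y -> encloses x y r \/ encloses y x r.
Proof.
move=> Lxi x y Hx Hy; rewrite !inE !negb_or => /andP[Nx Nx'] /andP[Ny Ny'].
have [A -> IA] := reading_letter Hx Nx Nx'.
have [B -> IB] := reading_letter Hy Ny Ny'.
move=> Nxy.
have NAB : A != B by apply/eqP => E; move: Nxy; rewrite E eqxx.
have Hr0 : nth None r 0 = Some None.
  by rewrite (nth_map xi) ?d_head // d_size (leq_trans _ c_size).
apply: (@odd_gaps_encloses _ None r _ (Some (Some A)) (Some (Some B)));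
  rewrite ?Hr0 //.
- by rewrite size_map d_size.
- exact: reading_odd_gaps.
- exact: reading_odd_gaps.
- exact: reading_even_cross_gaps.
- by apply: reading_even_cross_gaps; rewrite // eq_sym.
Qed.

End Reading.

Lemma cyc_equiv_map (T R : eqType) (g : T -> R) (c : seq T) r :
  uniq c -> cyc_equiv r (map g c) ->
  exists d, [/\ r = map g d, uniq d, size d = size c &
    next d =1 next c \/ next d =1 prev c].
Proof.
move=> Uc [k [->|->]].
  exists (rot k c); rewrite map_rot rot_uniq size_rot; split => //.
  by left => x; rewrite next_rot.
exists (rot k (rev c)); rewrite map_rot map_rev rot_uniq rev_uniq size_rot size_rev.
by split => //; right => x; rewrite next_rot ?rev_uniq // next_rev.
Qed.

Lemma next_reading (T : eqType) (c e : seq T) x0 : uniq c -> uniq (x0 :: e) ->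
  size (x0 :: e) = size c -> next (x0 :: e) =1 next c \/ next (x0 :: e) =1 prev c ->
  (forall i, i < size c -> next c (nth x0 (x0 :: e) i) = nth x0 (x0 :: e) i.+1) \/
  (forall i, i < size c -> next c (nth x0 (x0 :: e) i.+1) = nth x0 (x0 :: e) i).
Proof.
move=> Uc Ud Ed Hdir.
have next_d i : i < size (x0 :: e) ->
    next (x0 :: e) (nth x0 (x0 :: e) i) = nth x0 (x0 :: e) i.+1.
  by move=> Hi; rewrite next_nth mem_nth // index_uniq.
case: Hdir => H; [left|right] => i Hi; rewrite -Ed in Hi.
  by rewrite -H next_d.
by rewrite -next_d // H next_prev.
Qed.

Theorem theorem4 (V : finType) (adj : rel V) (c : seq V) :
  sunoid adj c ->
  jump_free None (Some None) (rimword adj c).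
Proof.
case=> [[[_ _ _ oddV] [c_uniq c_all c_size] rim_edges nonconsec]
        [_ [_ [xi [N3xi _ _]]]] sub_Ncond] r t.
move=> /(cyc_equiv_map c_uniq) [[|v0 e] [-> d_uniq d_size d_dir]] //= [Lv0 Et].
have Exi : v0 = xi := label_sigma N3xi Lv0; subst v0.
have c_odd : odd (size c).
  by rewrite -(card_uniqP c_uniq) (eq_card (B := V)) // => v; rewrite !inE c_all.
have sig_t : Some None \notin t.
  rewrite -Et; apply/mapP => -[v Hv /esym /(label_sigma N3xi) Ev].
  by move: d_uniq; rewrite /= -Ev Hv.
apply: jump_free_rep_pattern => // x y Hx Hy Nx Ny.
have [Nxs Nys] : x != Some None /\ y != Some None.
  by split; apply: contraNneq sig_t => <-.
have := reading_encloses_dich c_uniq c_all c_size c_odd rim_edges nonconsec N3xi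
  sub_Ncond d_uniq d_size erefl (next_reading c_uniq d_uniq d_size d_dir) Lv0.
rewrite /= Lv0 Et; apply; rewrite ?inE ?Hx ?Hy ?orbT ?negb_or ?Nx ?Ny ?Nxs ?Nys //.
Qed.
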